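(* With $P$ the Pauli tuple and $\overline{P}=(P_1,P_2,-P_3)$, one has $\mathcal W(\overline{P})=-\mathcal W(P)$, equivalently $\mathcal D_{\overline{P}}=-\mathcal D_P$.
   Context: For $A\in SM_d(\mathbb C)^g$ (tuples of self-adjoint $d\times d$ complex matrices), $\mathcal D_A=\bigcup_n\{X\in SM_n(\mathbb C)^g: I-\sum_i A_i\otimes X_i\succeq0\}$. For a tuple $T$ of operators on a Hilbert space $H$, the matrix range is $\mathcal W(T)=\bigcup_n\{\phi(T):\phi:B(H)\to M_n \text{ unital completely positive}\}$, with $\phi(T)=(\phi(T_1),\dots,\phi(T_g))$. For a set $K$ of tuples, $-K=\{-X: X\in K\}$. The Pauli tuple is $P=\left(\begin{bmatrix}1&0\\0&-1\end{bmatrix},\begin{bmatrix}0&1\\1&0\end{bmatrix},\begin{bmatrix}0&i\\-i&0\end{bmatrix}\right)$. *)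

From HB Require Import structures.
From mathcomp Require Import all_boot all_order all_algebra.
From mathcomp Require Import complex mxtens.
From mathcomp Require Import reals.
Set Implicit Arguments. Unset Strict Implicit. Unset Printing Implicit Defensive.
Import Order.TTheory GRing.Theory Num.Theory.
Local Open Scope ring_scope.

Section Defs.
Variable C : numClosedFieldType.

Definition adjmx {m n} (A : 'M[C]_(m, n)) : 'M[C]_(n, m) := (map_mx Num.conj A)^T.

Definition selfadj {n} (A : 'M[C]_n) : Prop := adjmx A = A.

Definition psd {n} (A : 'M[C]_n) : Prop :=
  selfadj A /\ forall v : 'cV[C]_n, 0 <= (adjmx v *m A *m v) 0 0.

(* block matrix [B i j]_{i,j<k} in M_k(M_m), realized as a km x km matrix *)
Definition blockmx {k m} (B : 'I_k -> 'I_k -> 'M[C]_m) : 'M[C]_(k * m) :=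
  \matrix_(r, s) B (mxtens_unindex r).1 (mxtens_unindex s).1
                   (mxtens_unindex r).2 (mxtens_unindex s).2.

Definition ucp {d n} (phi : 'M[C]_d -> 'M[C]_n) : Prop :=
  [/\ (forall (a : C) (X Y : 'M[C]_d), phi (a *: X + Y) = a *: phi X + phi Y),
      phi 1%:M = 1%:M &
      forall k (B : 'I_k -> 'I_k -> 'M[C]_d),
        psd (blockmx B) -> psd (blockmx (fun i j => phi (B i j)))].

(* matrix range of a g-tuple T of operators on H = C^d:
   membership of the level-n tuple X *)
Definition matrange {g d} (T : 'I_g -> 'M[C]_d) (n : nat) (X : 'I_g -> 'M[C]_n) : Prop :=
  exists phi : 'M[C]_d -> 'M[C]_n, ucp phi /\ forall i, X i = phi (T i).

Definition freespec {g d} (A : 'I_g -> 'M[C]_d) (n : nat) (X : 'I_g -> 'M[C]_n) : Prop :=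
  (forall i, selfadj (X i)) /\
  psd (1%:M - \sum_(i < g) tensmx (A i) (X i)).

Definition negset {g} (K : forall n, ('I_g -> 'M[C]_n) -> Prop) n (X : 'I_g -> 'M[C]_n) : Prop :=
  K n (fun i => - X i).

Definition pauli : 'I_3 -> 'M[C]_2 := fun i =>
  match val i with
  | 0 => \matrix_(r, s) (if r == s then (if val r == 0 then 1 else -1) else 0)
  | 1 => \matrix_(r, s) (if r == s then 0 else 1)
  | _ => \matrix_(r, s) (if r == s then 0 else if val r == 0 then 'i else - 'i)
  end.

Definition pauli_bar : 'I_3 -> 'M[C]_2 := fun i =>
  if val i == 2 then - pauli i else pauli i.

End Defs.

(* Conjugation by the Pauli matrix P3, which is a self-adjoint unitary, fixes
   P3 and negates P1 and P2, i.e. it maps P to -Pbar.  Composing a unital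
   completely positive map with X |-> P3 X P3 is again unital completely
   positive, which gives W(Pbar) = -W(P); conjugating the linear pencil by
   P3 (x) I, a congruence, gives D_Pbar = -D_P. *)
From HB Require Import structures.
From mathcomp Require Import all_boot all_order all_algebra.
From mathcomp Require Import complex mxtens.
From mathcomp Require Import reals.
Set Implicit Arguments. Unset Strict Implicit. Unset Printing Implicit Defensive.
Import Order.TTheory GRing.Theory Num.Theory.
Local Open Scope ring_scope.

Section Adjoint.
Variable C : numClosedFieldType.

Lemma adjmx_mul m n p (A : 'M[C]_(m, n)) (B : 'M[C]_(n, p)) :
  adjmx (A *m B) = adjmx B *m adjmx A.
Proof. by rewrite /adjmx map_mxM trmx_mul. Qed.

Lemma adjmxK m n (A : 'M[C]_(m, n)) : adjmx (adjmx A) = A.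
Proof. by apply/matrixP => i j; rewrite !mxE conjCK. Qed.

Lemma adjmxN m n (A : 'M[C]_(m, n)) : adjmx (- A) = - adjmx A.
Proof. by rewrite /adjmx map_mxN linearN. Qed.

Lemma adjmx1 n : adjmx (1%:M : 'M[C]_n) = 1%:M.
Proof. by rewrite /adjmx map_mx1 trmx1. Qed.

Lemma adjmx_tens m n p q (A : 'M[C]_(m, n)) (B : 'M[C]_(p, q)) :
  adjmx (A *t B) = adjmx A *t adjmx B.
Proof. by rewrite /adjmx map_mxT trmx_tens. Qed.

Lemma tensmx11 m n : (1%:M : 'M[C]_m) *t (1%:M : 'M[C]_n) = 1%:M.
Proof.
apply/matrixP => r s.
case: (mxtens_indexP r) => i j; case: (mxtens_indexP s) => k l.
by rewrite tensmxE !mxE (can_eq (@mxtens_indexK _ _)) xpair_eqE -natrM mulnb.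
Qed.

Lemma tensmxNN m n p q (A : 'M[C]_(m, n)) (B : 'M[C]_(p, q)) :
  (- A) *t (- B) = A *t B.
Proof. by apply/matrixP => r s; rewrite !mxE mulrNN. Qed.

Lemma psd_congruence n k (A : 'M[C]_n) (V : 'M[C]_(n, k)) :
  psd A -> psd (adjmx V *m A *m V).
Proof.
move=> [A_sa A_nonneg]; split.
  by rewrite /selfadj !adjmx_mul adjmxK A_sa mulmxA.
by move=> v; have := A_nonneg (V *m v); rewrite adjmx_mul !mulmxA.
Qed.

Lemma blockmx_sum k m (B : 'I_k -> 'I_k -> 'M[C]_m) :
  blockmx B = \sum_i \sum_j delta_mx i j *t B i j.
Proof.
apply/matrixP => r s.
case: (mxtens_indexP r) => i1 i2; case: (mxtens_indexP s) => j1 j2.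
rewrite !mxE !mxtens_indexK /= summxE (bigD1 i1) //= summxE (bigD1 j1) //=.
rewrite tensmxE !mxE !eqxx mul1r big1 ?addr0; last first.
  by move=> j /negbTE j_neq; rewrite tensmxE !mxE eqxx (eq_sym j1) j_neq mul0r.
rewrite big1 ?addr0 // => i /negbTE i_neq; rewrite summxE big1 // => j _.
by rewrite tensmxE !mxE (eq_sym i1) i_neq mul0r.
Qed.

Lemma blockmx_congruence k m n (B : 'I_k -> 'I_k -> 'M[C]_m) (V : 'M[C]_(m, n)) :
  blockmx (fun i j => adjmx V *m B i j *m V) =
  adjmx (1%:M *t V) *m blockmx B *m (1%:M *t V).
Proof.
rewrite !blockmx_sum mulmx_sumr mulmx_suml; apply: eq_bigr => i _.
rewrite mulmx_sumr mulmx_suml; apply: eq_bigr => j _.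
by rewrite adjmx_tens adjmx1 !tensmx_mul mul1mx mulmx1.
Qed.

Lemma ucp_congruence d n (phi : 'M[C]_d -> 'M[C]_n) (V : 'M[C]_d) :
  adjmx V *m V = 1%:M -> ucp phi -> ucp (fun A => phi (adjmx V *m A *m V)).
Proof.
move=> V_isometry [phi_lin phi1 phi_cp]; split.
- by move=> a X Y; rewrite mulmxDr mulmxDl -scalemxAr -scalemxAl phi_lin.
- by rewrite mulmx1 V_isometry.
- move=> k B B_psd; apply: (phi_cp k (fun i j => adjmx V *m B i j *m V)).
  by rewrite blockmx_congruence; apply: psd_congruence.
Qed.

Lemma ucpN d n (phi : 'M[C]_d -> 'M[C]_n) A : ucp phi -> phi (- A) = - phi A.
Proof.
move=> [phi_lin _ _].
have phi0 : phi 0 = 0.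
  have := phi_lin 1 0 0; rewrite !scale1r addr0 => phi00.
  by apply: (addrI (phi 0)); rewrite addr0 -phi00.
by have := phi_lin (-1) A 0; rewrite addr0 phi0 addr0 !scaleN1r.
Qed.

End Adjoint.

Section SelfAdjointInvolution.
Variables (C : numClosedFieldType) (d : nat) (U : 'M[C]_d).
Hypotheses (U_sa : adjmx U = U) (UU : U *m U = 1%:M).

Lemma conj_oppr_sym g (S T : 'I_g -> 'M[C]_d) :
  (forall i, U *m T i *m U = - S i) -> forall i, U *m S i *m U = - T i.
Proof.
move=> UTU i; rewrite -[S i]opprK -UTU mulmxN mulNmx.
by rewrite !mulmxA UU mul1mx -mulmxA UU mulmx1.
Qed.

Lemma matrange_conj_opp g n (S T : 'I_g -> 'M[C]_d) (X Y : 'I_g -> 'M[C]_n) :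
  (forall i, U *m S i *m U = - T i) -> (forall i, Y i = - X i) ->
  matrange T Y -> matrange S X.
Proof.
move=> USU YX [phi [phi_ucp phiT]].
exists (fun A => phi (adjmx U *m A *m U)); split.
  by apply: ucp_congruence; rewrite ?U_sa.
by move=> i; rewrite U_sa USU ucpN // -phiT YX opprK.
Qed.

Lemma freespec_conj_opp g n (S T : 'I_g -> 'M[C]_d) (X Y : 'I_g -> 'M[C]_n) :
  (forall i, U *m T i *m U = - S i) -> (forall i, Y i = - X i) ->
  freespec T Y -> freespec S X.
Proof.
move=> UTU YX [Y_sa pencil_psd]; split.
  by move=> i; apply: oppr_inj; rewrite -adjmxN -YX Y_sa.
pose W := U *t (1%:M : 'M[C]_n).
have W_sa : adjmx W = W by rewrite adjmx_tens U_sa adjmx1.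
have WW : W *m W = 1%:M by rewrite tensmx_mul UU mulmx1 tensmx11.
have W_pencil : W *m (1%:M - \sum_i T i *t Y i) *m W = 1%:M - \sum_i S i *t X i.
  rewrite mulmxBr mulmxBl mulmx1 WW mulmx_sumr mulmx_suml; congr (_ - _).
  by apply: eq_bigr => i _; rewrite !tensmx_mul mul1mx mulmx1 UTU YX tensmxNN.
by rewrite -W_pencil -{1}W_sa; apply: psd_congruence.
Qed.

Lemma matrange_conj_oppE g n (S T : 'I_g -> 'M[C]_d) (X : 'I_g -> 'M[C]_n) :
  (forall i, U *m T i *m U = - S i) ->
  matrange S X <-> matrange T (fun i => - X i).
Proof.
move=> UTU; split; apply: matrange_conj_opp => // i; rewrite ?opprK //.
exact: conj_oppr_sym.
Qed.

Lemma freespec_conj_oppE g n (S T : 'I_g -> 'M[C]_d) (X : 'I_g -> 'M[C]_n) :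
  (forall i, U *m T i *m U = - S i) ->
  freespec S X <-> freespec T (fun i => - X i).
Proof.
move=> UTU; split; apply: freespec_conj_opp => // i; rewrite ?opprK //.
exact: conj_oppr_sym.
Qed.

End SelfAdjointInvolution.

Section Pauli.
Variable C : numClosedFieldType.

Definition pauli3 : 'M[C]_2 := pauli C (Ordinal (isT : (2 < 3)%N)).

Ltac entrywise := apply/matrixP => -[[|[|?]] ?] [[|[|?]] ?] //;
  rewrite ?(mxE, big_ord_recl, big_ord0) //=.

Ltac simp_ring := rewrite ?(mul0r, mulr0, add0r, addr0, mulr1, mul1r, mulrN,
  mulNr, mulCii, opprK, oppr0) //.

Lemma pauli3_sa : adjmx pauli3 = pauli3.
Proof. by entrywise; rewrite ?rmorph0 -?conjCi ?conjCK. Qed.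

Lemma pauli3_sqr : pauli3 *m pauli3 = 1%:M.
Proof. by entrywise; simp_ring. Qed.

Lemma pauli3_conj i : pauli3 *m pauli C i *m pauli3 = - pauli_bar C i.
Proof. by case: i => [[|[|[|?]]] ?] //; rewrite /pauli_bar /=; entrywise; simp_ring. Qed.

End Pauli.

Theorem mainTheorem2 (R : realType) :
  (forall (n : nat) (X : 'I_3 -> 'M[R[i]]_n),
      matrange (pauli_bar R[i]) X <-> negset (fun m => @matrange _ _ _ (pauli R[i]) m) X)
  /\
  (forall (n : nat) (X : 'I_3 -> 'M[R[i]]_n),
      freespec (pauli_bar R[i]) X <-> negset (fun m => @freespec _ _ _ (pauli R[i]) m) X).
Proof.
split=> n X; rewrite /negset.
- exact: (matrange_conj_oppE (pauli3_sa R[i]) (pauli3_sqr R[i]) X (pauli3_conj R[i])).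
- exact: (freespec_conj_oppE (pauli3_sa R[i]) (pauli3_sqr R[i]) X (pauli3_conj R[i])).
Qed.
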